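(* Let $p\in\mathbb{N}$. For a dense open set of $a\in\mathbb{R}_+^p$, the spectrum $\sigma(J_a)$ has $p-1$ open gaps.
   Context: $\mathbb{R}_+=(0,\infty)$; $a\in\mathbb{R}_+^p$ is identified with the $p$-periodic positive sequence $(a_n)_{n\in\mathbb{Z}}$, and $J_a$ is the operator on $\ell^2(\mathbb{Z})$ given by $[J_a u]_n = a_{n-1}u_{n-1}+a_nu_{n+1}$. For a $p$-periodic Jacobi matrix $J_{a,b}$ ($[Ju]_n=a_{n-1}u_{n-1}+b_nu_n+a_nu_{n+1}$), define $T_z(n)=\frac{1}{a_n}\begin{pmatrix} z-b_n & -1\\ a_n^2 & 0\end{pmatrix}$, the monodromy $\Phi(z)=T_z(p)T_z(p-1)\cdots T_z(1)$ and discriminant $D(z)=\mathrm{Tr}\,\Phi(z)$. Then $\sigma(J)=\{E\in\mathbb{R}: D(E)\in[-2,2]\}$, and $\{E: D(E)\in(-2,2)\}$ has exactly $p$ connected components; the bands are their closures, numbered left to right $B_1,\dots,B_p$. The $j$-th gap ($1\le j\le p-1$) is open if the right endpoint of $B_j$ is strictly less than the left endpoint of $B_{j+1}$ (the gap then being the open interval between them), and closed if these endpoints coincide. *)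

From HB Require Import structures.
From mathcomp Require Import all_boot all_order all_algebra.
From mathcomp Require Import all_classical all_reals all_analysis.
Set Implicit Arguments. Unset Strict Implicit. Unset Printing Implicit Defensive.
Import Order.TTheory GRing.Theory Num.Theory.
Import numFieldNormedType.Exports.
Local Open Scope ring_scope.
Local Open Scope classical_set_scope.

Section Jacobi.
Variables (R : realType) (p : nat).

(* a vector v in R^p (a row vector) seen as the p-periodic sequence n |-> v_(n mod p) *)
Definition perseq (v : 'rV[R]_p) (n : nat) : R :=
  match @insub nat (fun k => (k < p)%N) 'I_p (n %% p)%N with
  | Some i => v 0 i
  | None => 0
  end.

Definition transfer (a b : 'rV[R]_p) (z : R) (n : nat) : 'M[R]_2 :=
  (perseq a n)^-1 *:
  \matrix_(i < 2, j < 2)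
     (if (i == 0 :> nat)
      then (if (j == 0 :> nat) then z - perseq b n else -1)
      else (if (j == 0 :> nat) then perseq a n ^+ 2 else 0)).

Fixpoint monodromy_upto (a b : 'rV[R]_p) (z : R) (n : nat) : 'M[R]_2 :=
  match n with
  | 0 => 1%:M
  | k.+1 => transfer a b z k.+1 *m monodromy_upto a b z k
  end.

Definition monodromy a b z := monodromy_upto a b z p.

Definition discriminant a b (z : R) : R := \tr (monodromy a b z).

(* The open set {E : D(E) in (-2,2)}, whose closure is the spectrum. *)
Definition interior_spec a b : set R :=
  [set E | -2 < discriminant a b E < 2].

(* All p-1 gaps of sigma(J_{a,b}) are open: the connected components of
   {E : D(E) in (-2,2)} are p open intervals (l_j, r_j), j = 0..p-1, listed
   left to right, and the right endpoint of each band [l_j, r_j] is strictly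
   less than the left endpoint of the next band. *)
Definition all_gaps_open a b : Prop :=
  exists l r : nat -> R,
    [/\ forall j, (j < p)%N -> l j < r j,
        forall j, (j.+1 < p)%N -> r j < l j.+1
      & forall E, interior_spec a b E <->
                  exists2 j, (j < p)%N & l j < E < r j].

Definition zero_b : 'rV[R]_p := 0.

Definition pos_orthant : set 'rV[R]_p := [set a | forall i, 0 < a 0 i].

End Jacobi.

From HB Require Import structures.
From mathcomp Require Import all_boot all_order all_algebra.
From mathcomp Require Import all_classical all_reals all_analysis.
From mathcomp Require Import polyrcf.
From mathcomp Require Import ring lra zify.
Set Implicit Arguments. Unset Strict Implicit. Unset Printing Implicit Defensive.
Import Order.TTheory GRing.Theory Num.Theory.
Import numFieldNormedType.Exports.
Local Open Scope ring_scope.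
Local Open Scope classical_set_scope.

(* For b = 0 the discriminant D_a(E) is a polynomial of degree p in E whose
   coefficients depend continuously on a.  All gaps are open as soon as
   D_a^2 - 4, of degree 2p, alternates in sign at 2p + 1 increasing points:
   it then has 2p simple real zeros and the bands are the intervals between
   consecutive pairs of them.  This condition is open in a.  It is also dense:
   freeze a_1, ..., a_(p-1) and vary t = a_p.  Then
   D = t^-1 (E P - Q) + t S, where P, Q, S are entries of the monodromy over
   the first p - 1 steps.  As for orthogonal polynomials, P has p - 1 simple
   real zeros s_i at which Q alternates in sign, and det = 1 gives S = -1/Q
   there, so D(s_i) = -(Q(s_i) / t + t / Q(s_i)) has modulus > 2 unless
   t = |Q(s_i)|.  With the behaviour at infinity, |D| > 2 with alternating
   signs at p + 1 points, and D vanishes in between. *)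

(** * Sign charts of real polynomials *)

Section SignCharts.
Variable R : rcfType.
Implicit Types (q : {poly R}) (f : R -> R) (y r : nat -> R) (x u v : R).

Definition increasing_on y N := forall k, (k < N)%N -> y k < y k.+1.

Lemma increasing_lt y N : increasing_on y N ->
  forall i j, (i < j)%N -> (j <= N)%N -> y i < y j.
Proof.
move=> yinc i j ij jN.
have := @homo_ltn_in _ [pred k | k <= N]%N y <%R (fun _ _ _ => @lt_trans _ _ _ _ _).
apply => //; rewrite ?inE ?(leq_trans (ltnW ij)) //.
  by move=> a b _; rewrite !inE => bN c /andP[_ /ltnW cb]; exact: leq_trans cb bN.
by move=> k _; rewrite inE; apply: yinc.
Qed.

Lemma increasing_le y N : increasing_on y N ->
  forall i j, (i <= j)%N -> (j <= N)%N -> y i <= y j.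
Proof.
move=> yinc i j; rewrite leq_eqVlt => /orP[/eqP -> //|ij] jN.
exact/ltW/(increasing_lt yinc).
Qed.

Lemma signr_subS N k : (k < N)%N -> (-1) ^+ (N - k) = - (-1) ^+ (N - k.+1) :> R.
Proof. by move=> kN; rewrite -(subnSK kN) exprS mulN1r. Qed.

Definition alternating f y N :=
  increasing_on y N /\ forall k, (k <= N)%N -> 0 < (-1) ^+ (N - k) * f (y k).

Lemma alternating_mul_lt0 f y N k : alternating f y N -> (k < N)%N ->
  f (y k) * f (y k.+1) < 0.
Proof.
move=> [_ ysign] kN; have := ysign k (ltnW kN); have := ysign k.+1 kN.
rewrite (signr_subS kN); set e := (-1) ^+ _ => h1 h2.
have := mulr_gt0 h2 h1.
by rewrite !mulNr mulrACA -expr2 sqrr_sign mul1r oppr_gt0.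
Qed.

Lemma no_root_mul_gt0 q u v :
  (forall t, Num.min u v <= t <= Num.max u v -> ~~ root q t) -> 0 < q.[u] * q.[v].
Proof.
have pos a b : a <= b -> (forall t, a <= t <= b -> ~~ root q t) -> 0 < q.[a] * q.[b].
  move=> ab qnz; rewrite ltNge; apply/negP.
  by move=> /(polyrcf.poly_ivt ab) [t]; rewrite in_itv /= => /qnz /negP.
by have [uv|/ltW vu] := leP u v => qnz; last rewrite mulrC; apply: pos.
Qed.

Lemma roots_exhaust q r N : q != 0 -> (size q <= N.+1)%N ->
  increasing_on r N.-1 -> (forall k, (k < N)%N -> root q (r k)) ->
  forall x, root q x -> exists2 k, (k < N)%N & x = r k.
Proof.
move=> qn0 sq rinc rroot x qx.
have [/mapP[k]|xnew] := boolP (x \in [seq r k | k <- iota 0 N]).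
  by rewrite mem_iota => kN ->; exists k.
have rinj : {in iota 0 N &, injective r}.
  move=> i j; rewrite !mem_iota => /andP[_ iN] /andP[_ jN] rij.
  have rlt m n : (m < n)%N -> (n < N)%N -> r m < r n.
    by move=> mn nN; apply: (increasing_lt rinc mn); rewrite -ltnS (ltn_predK nN).
  by case: (ltngtP i j) => // ij; [have := rlt _ _ ij jN | have := rlt _ _ ij iN];
     rewrite rij ltxx.
have := max_poly_roots qn0 (rs := x :: [seq r k | k <- iota 0 N]).
rewrite /= qx xnew map_inj_in_uniq ?iota_uniq // size_map size_iota ltnNge sq.
have rootsr : all (root q) [seq r k | k <- iota 0 N].
  by apply/allP => t /mapP[k]; rewrite mem_iota => /andP[_ kN] ->; apply: rroot.
by rewrite rootsr /= => contra; have := contra isT isT.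
Qed.

(* The j-th gap of r : nat -> R (j <= N) is the open interval (r j.-1, r j),
   unbounded below for j = 0 and above for j = N. *)
Definition in_gap r N j x : bool :=
  ((0 < j)%N ==> (r j.-1 < x)) && ((j < N)%N ==> (x < r j)).

Definition sign_chart q r N := [/\ increasing_on r N.-1,
  forall k, (k < N)%N -> root q (r k)
  & forall j x, (j <= N)%N -> in_gap r N j x -> 0 < (-1) ^+ (N - j) * q.[x]].

Lemma in_gap_between r N j u v t :
  in_gap r N j u -> in_gap r N j v -> Num.min u v <= t <= Num.max u v -> in_gap r N j t.
Proof.
move=> /andP[lu uh] /andP[lv vh] /andP[ut tv]; apply/andP; split; apply/implyP => jN.
  by apply: lt_le_trans ut; rewrite lt_min (implyP lu) ?(implyP lv).
by apply: le_lt_trans tv _; rewrite gt_max (implyP uh) ?(implyP vh).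
Qed.

Lemma gap_noroot q r N j x : increasing_on r N.-1 ->
  (forall t, root q t -> exists2 k, (k < N)%N & t = r k) ->
  (j <= N)%N -> in_gap r N j x -> ~~ root q x.
Proof.
move=> rinc rall jN /andP[lo hi]; apply/negP => /rall [k kN xk]; subst x.
have rle m n : (m <= n)%N -> (n < N)%N -> r m <= r n.
  by move=> mn nN; apply: (increasing_le rinc mn); rewrite -ltnS (ltn_predK nN).
have [kj|jk] := ltnP k j.
  have j0 : (0 < j)%N := leq_ltn_trans (leq0n k) kj.
  move: (implyP lo j0); rewrite ltNge rle //; first by rewrite -ltnS prednK.
  by rewrite (leq_trans _ jN) // ltn_predL.
by move: (implyP hi (leq_ltn_trans jk kN)); rewrite ltNge rle.
Qed.

Lemma alternating_roots q y N : (size q <= N.+1)%N -> alternating (horner q) y N ->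
  exists2 r, sign_chart q r N & forall k, (k < N)%N -> y k < r k < y k.+1.
Proof.
move=> sq yalt; have [yinc ysign] := yalt.
have [r rP] : {r : nat -> R &
    forall k, (k < N)%N -> y k < r k < y k.+1 /\ root q (r k)}.
  apply: (@choice _ _ (fun k t => (k < N)%N -> y k < t < y k.+1 /\ root q t)) => k.
  have [kN|_] := ltnP k N; last by exists 0.
  have [t] := poly_ivtoo (ltW (yinc k kN)) (alternating_mul_lt0 yalt kN).
  by rewrite in_itv /= => yt qt; exists t.
have rinc : increasing_on r N.-1.
  move=> k kN; have kN' : (k.+1 < N)%N by rewrite -ltn_predRL.
  by case: (rP k (ltnW kN')) => /andP[_ /lt_trans + ] _; apply; case: (rP _ kN') => /andP[].
have qn0 : q != 0.
  by apply: contraTneq (ysign N (leqnn N)) => ->; rewrite horner0 mulr0 ltxx.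
have rall := roots_exhaust qn0 sq rinc (fun k kN => (rP k kN).2).
exists r => [|k kN]; last exact: (rP k kN).1.
split=> // [k kN|j x jN xgap]; first exact: (rP k kN).2.
have ygap : in_gap r N j (y j).
  apply/andP; split; apply/implyP => jN'; last by case: (rP j jN') => /andP[].
  by case: (rP j.-1 _) => [|/andP[_]]; rewrite ?prednK // (leq_trans _ jN) // leq_pred.
have := no_root_mul_gt0 (fun t tb => gap_noroot rinc rall jN (in_gap_between xgap ygap tb)).
have := ysign j jN; set e := (-1) ^+ _ => ey xy.
have qy0 : q.[y j] != 0 by apply: contraTneq ey => ->; rewrite mulr0 ltxx.
have := mulr_gt0 ey xy; rewrite mulrACA [q.[y j] * _]mulrC.
by rewrite pmulr_lgt0 // -expr2 exprn_even_gt0.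
Qed.

Lemma poly_pinfty_ge q B m : 0 < lead_coef q -> (1 < size q)%N ->
  exists2 x, B <= x & m <= q.[x].
Proof.
move=> lq sq; have [n qn] := poly_lim_infty m lq sq.
by exists (Num.max n B); rewrite ?le_max ?lexx ?orbT // qn // le_max lexx.
Qed.

Lemma poly_ninfty_ge q B m : 0 < lead_coef q -> (1 < size q)%N ->
  exists2 x, x <= B & m <= (-1) ^+ (size q).-1 * q.[x].
Proof.
move=> lq sq; pose q' := (-1) ^+ (size q).-1 *: (q \Po - 'X).
have sX : size (- 'X : {poly R}) = 2 by rewrite size_polyN size_polyX.
have sq' : size q' = size q by rewrite size_scale ?signr_eq0 // size_comp_poly2.
have lq' : 0 < lead_coef q'.
  rewrite lead_coefZ lead_coef_comp ?sX // lead_coefN lead_coefX mulrCA.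
  by rewrite -expr2 sqrr_sign mulr1.
have [|x Bx mx] := poly_pinfty_ge (- B) m lq' _; first by rewrite sq'.
exists (- x); first by rewrite lerNl.
by move: mx; rewrite /q' hornerZ horner_comp hornerN hornerX.
Qed.

Lemma extend_alternating q s M B : 0 < lead_coef q -> size q = M.+2 ->
  increasing_on s M.-1 -> (forall i, (i < M)%N -> B < (-1) ^+ (M - i) * q.[s i]) ->
  exists y, [/\ increasing_on y M.+1,
    forall k, (k <= M.+1)%N -> B < (-1) ^+ (M.+1 - k) * q.[y k]
    & forall i, (i < M)%N -> y i.+1 = s i].
Proof.
move=> lq sq sinc ssign; have sq1 : (1 < size q)%N by rewrite sq.
have [lo lolt lobig] := poly_ninfty_ge (s 0%N - 1) (B + 1) lq sq1.
have [hi higt hibig] := poly_pinfty_ge (s M.-1 + 1) (B + 1) lq sq1.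
rewrite sq /= in lobig.
pose y k := if k is k'.+1 then (if (k' < M)%N then s k' else hi) else lo.
have s0M : s 0%N <= s M.-1 by exact: (increasing_le sinc (leq0n _) (leqnn _)).
exists y; split => [k kM|[|k] kM|i iM]; rewrite /y /=.
- case: k kM => [|k] kM /=.
    case: ifP => M0; first by apply: le_lt_trans lolt _; rewrite gtrBl ltr01.
    by apply: le_lt_trans lolt _; apply: lt_le_trans higt; lra.
  rewrite ltnS in kM; rewrite kM; case: ifP => kM'.
    by apply: sinc; rewrite -ltnS prednK // (leq_ltn_trans _ kM').
  have -> : k = M.-1.
    by apply/eqP; rewrite -eqSS prednK ?(leq_ltn_trans _ kM) // eqn_leq kM leqNgt kM'.
  by apply: lt_le_trans higt; rewrite ltrDl ltr01.
- by rewrite subn0; apply: lt_le_trans lobig; rewrite ltrDl ltr01.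
- case: ifP => kM'; first by rewrite subSS; apply: ssign.
  have -> : k = M by apply/eqP; rewrite eqn_leq -ltnS kM leqNgt kM'.
  by rewrite subnn expr0 mul1r; apply: lt_le_trans hibig; rewrite ltrDl ltr01.
- by rewrite iM.
Qed.

Lemma sqr_lt4 (d : R) : (d ^+ 2 < 4) = (`|d| < 2).
Proof.
have -> : 4 = 2 ^+ 2 :> R by rewrite -natrX.
by rewrite -(real_normK (num_real d)) ltr_pXn2r // qualifE /= ?ler0n ?normr_ge0.
Qed.

Lemma sqr_gt4 (d : R) : (4 < d ^+ 2) = (2 < `|d|).
Proof.
have -> : 4 = 2 ^+ 2 :> R by rewrite -natrX.
by rewrite -(real_normK (num_real d)) ltr_pXn2r // qualifE /= ?ler0n ?normr_ge0.
Qed.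

Lemma signr_double_sub N j : (j <= N.*2)%N -> (-1) ^+ (N.*2 - j) = (-1) ^+ j :> R.
Proof. by move=> jN; rewrite -signr_odd oddB // odd_double signr_odd. Qed.

Definition interleave (z x : nat -> R) j := if odd j then x j./2 else z j./2.

Lemma alternating_interleave f (z x : nat -> R) N :
  (forall k, (k < N)%N -> z k < x k < z k.+1) ->
  (forall k, (k <= N)%N -> 2 < `|f (z k)|) -> (forall k, (k < N)%N -> `|f (x k)| < 2) ->
  alternating (fun E => f E ^+ 2 - 4) (interleave z x) N.*2.
Proof.
move=> zxz zbig xsmall; split => [j jN|j jN].
  rewrite /interleave /= uphalf_half.
  have := odd_double_half j; case: (odd j) => /= jE.
    have kN : (j./2 < N)%N by rewrite -ltn_double; lia.
    by rewrite add1n; case/andP: (zxz _ kN).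
  have kN : (j./2 < N)%N by rewrite -ltn_double; lia.
  by rewrite add0n; case/andP: (zxz _ kN).
rewrite /interleave signr_double_sub // -signr_odd.
have := odd_double_half j; case: (odd j) => /= jE.
  have kN : (j./2 < N)%N by rewrite -ltn_double; lia.
  by rewrite expr1 mulN1r oppr_gt0 subr_lt0 sqr_lt4 xsmall.
have kN : (j./2 <= N)%N by rewrite -leq_double; lia.
by rewrite expr0 mul1r subr_gt0 sqr_gt4 zbig.
Qed.

Lemma in_gap_cover r N x : (forall k, (k < N)%N -> x != r k) ->
  exists2 j, (j <= N)%N & in_gap r N j x.
Proof.
move=> xr; have hasN : exists j, (j <= N)%N && ((j < N)%N ==> (x < r j)).
  by exists N; rewrite leqnn ltnn.
case: (ex_minnP hasN) => j /andP[jN hi] jmin; exists j => //.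
rewrite /in_gap hi andbT; apply/implyP => j0.
have jN' : (j.-1 < N)%N by rewrite (leq_trans _ jN) // ltn_predL.
rewrite lt_neqAle eq_sym xr // leNgt /=; apply/negP => xlt.
by have := jmin j.-1; rewrite (ltnW jN') jN' xlt => /(_ isT); rewrite leqNgt ltn_predL j0.
Qed.

Lemma bands_of_alternating (D : {poly R}) p y : (size D <= p.+1)%N ->
  alternating (fun E => D.[E] ^+ 2 - 4) y p.*2 ->
  exists l r : nat -> R,
    [/\ forall j, (j < p)%N -> l j < r j,
        forall j, (j.+1 < p)%N -> r j < l j.+1
      & forall E, (-2 < D.[E] < 2) <-> exists2 j, (j < p)%N & l j < E < r j].
Proof.
move=> sD [yinc ysign]; pose Q := D * D - 4%:P.
have QE E : Q.[E] = D.[E] ^+ 2 - 4 by rewrite /Q !hornerE expr2.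
have sQ : (size Q <= p.*2.+1)%N.
  rewrite (leq_trans (size_polyD _ _)) // geq_max size_polyN size_polyC.
  rewrite (leq_trans (size_polyMleq _ _)) ?(leq_trans (leq_b1 _)) //.
  by rewrite -subn1 -addnn; lia.
have Qalt : alternating (horner Q) y p.*2 by split => // k kp; rewrite QE ysign.
have [rho [rinc rroot rsign] _] := alternating_roots sQ Qalt.
exists (fun i => rho i.*2), (fun i => rho i.*2.+1); split.
- by move=> j jp; apply: rinc; rewrite ltn_predRL -doubleS leq_double.
- by move=> j jp; rewrite doubleS; apply: rinc; rewrite ltn_predRL -doubleS ltn_double.
move=> E; rewrite -ltr_norml -sqr_lt4 -subr_lt0 -QE; split => [QE0|[i ip gapE]].
  have [j jp gapE] : exists2 j, (j <= p.*2)%N & in_gap rho p.*2 j E.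
    apply: in_gap_cover => k kp; apply: contraTneq QE0 => ->.
    by rewrite (rootP (rroot k kp)) ltxx.
  have := rsign j E jp gapE; rewrite signr_double_sub // -signr_odd.
  have := odd_double_half j; case: (odd j) => /= jE; last first.
    by rewrite expr0 mul1r ltNge (ltW QE0).
  move=> _; set i := j./2; have ip : (i < p)%N by rewrite -ltn_double; lia.
  exists i => //; move: gapE; rewrite -jE add1n /in_gap /= => /andP[-> /implyP].
  by apply; rewrite -doubleS leq_double.
have gapE' : in_gap rho p.*2 i.*2.+1 E by rewrite /in_gap /= -doubleS leq_double ip.
have ip2 : (i.*2.+1 <= p.*2)%N by rewrite ltn_double.
have := rsign _ E ip2 gapE'.
by rewrite signr_double_sub // -signr_odd /= odd_double expr1 mulN1r oppr_gt0.
Qed.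

End SignCharts.

Arguments signr_subS {R N k}.

(** * The monodromy of a Jacobi matrix with zero diagonal, as polynomials *)

Section MonodromyPolynomials.
Variable R : rcfType.

(* The entries ((pm00, pm01), (pm10, pm11)) of T_z(k) ... T_z(1) for the
   off-diagonal coefficients c, as polynomials in z. *)
Fixpoint pmono (c : nat -> R) k : ({poly R} * {poly R}) * ({poly R} * {poly R}) :=
  if k is k'.+1 then
    (((c k)^-1 *: ((pmono c k').1.1 * 'X - (pmono c k').2.1),
      (c k)^-1 *: ((pmono c k').1.2 * 'X - (pmono c k').2.2)),
     (c k *: (pmono c k').1.1, c k *: (pmono c k').1.2))
  else ((1, 0), (0, 1)).

Definition pm00 c k := (pmono c k).1.1.
Definition pm01 c k := (pmono c k).1.2.
Definition pm10 c k := (pmono c k).2.1.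
Definition pm11 c k := (pmono c k).2.2.

Lemma pm00S c k : pm00 c k.+1 = (c k.+1)^-1 *: (pm00 c k * 'X - pm10 c k).
Proof. by []. Qed.
Lemma pm01S c k : pm01 c k.+1 = (c k.+1)^-1 *: (pm01 c k * 'X - pm11 c k).
Proof. by []. Qed.
Lemma pm10S c k : pm10 c k.+1 = c k.+1 *: pm00 c k. Proof. by []. Qed.
Lemma pm11S c k : pm11 c k.+1 = c k.+1 *: pm01 c k. Proof. by []. Qed.

Lemma eq_pmono c c' k : (forall i, (0 < i <= k)%N -> c i = c' i) -> pmono c k = pmono c' k.
Proof.
elim: k => // k IH cc' /=; rewrite IH ?cc' ?leqnn // => i /andP[i0 ik].
by rewrite cc' // i0 ltnW.
Qed.

Definition ptrace c k := pm00 c k + pm11 c k.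

Lemma two_lt_add_div (a t : R) : 0 < a -> 0 < t -> a != t -> 2 < a / t + t / a.
Proof.
move=> a0 t0 neq_at; have -> : a / t + t / a = 2 + (a - t) ^+ 2 / (a * t).
  by field; rewrite !gt_eqF.
by rewrite ltrDl divr_gt0 ?exprn_even_gt0 ?mulr_gt0 // subr_eq0.
Qed.

Section PositiveCoefficients.
Variable c : nat -> R.
Hypothesis c_gt0 : forall i, 0 < c i.

Lemma size_pmono k :
  [/\ size (pm00 c k) = k.+1, 0 < lead_coef (pm00 c k), (size (pm01 c k) <= k)%N,
      (size (pm10 c k) <= k)%N & (size (pm11 c k) <= k.+1)%N].
Proof.
elim: k => [|k [s00 l00 s01 s10 s11]].
  by rewrite /pm00 /pm01 /pm10 /pm11 /= size_poly1 lead_coef1 ltr01 size_poly0.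
have cV0 : (c k.+1)^-1 != 0 by rewrite invr_eq0 gt_eqF.
have sX00 : size (pm00 c k * 'X) = k.+2 by rewrite size_mulX -?size_poly_eq0 s00.
have sN10 : (size (- pm10 c k)%R < size (pm00 c k * 'X)%R)%N.
  by rewrite size_polyN sX00 ltnS (leq_trans s10).
split.
- by rewrite pm00S size_scale // size_polyDl.
- by rewrite pm00S lead_coefZ lead_coefDl // lead_coefMX mulr_gt0 // invr_gt0.
- rewrite pm01S (leq_trans (size_scale_leq _ _)) // (leq_trans (size_polyD _ _)) //.
  rewrite geq_max size_polyN s11 andbT (leq_trans (size_polyMleq _ _)) //.
  by rewrite size_polyX addn2.
- by rewrite pm10S (leq_trans (size_scale_leq _ _)) ?s00.
- by rewrite pm11S (leq_trans (size_scale_leq _ _)) // (leq_trans s01) // leqW.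
Qed.

Lemma det_pmono k x : (pm00 c k).[x] * (pm11 c k).[x] - (pm01 c k).[x] * (pm10 c k).[x] = 1.
Proof.
elim: k => [|k IH]; first by rewrite /pm00 /pm01 /pm10 /pm11 /= !hornerE; ring.
have c0 : c k.+1 != 0 by rewrite gt_eqF.
rewrite pm00S pm01S pm10S pm11S !(hornerZ, hornerD, hornerN, hornerMX) -IH.
by field.
Qed.

(* Classical interlacing of the zeros of pm00 c m and pm00 c m.+1, carried
   along with the sign of pm10 c m = c m * pm00 c m.-1 at those zeros. *)
Lemma sign_chart_pm00 m : exists s, sign_chart (pm00 c m) s m /\
  forall i, (i < m)%N -> 0 < (-1) ^+ (m - i.+1) * (pm10 c m).[s i].
Proof.
elim: m => [|m [s [[sinc sroot ssign] s10]]].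
  exists (fun=> 0); split => //; split => // j x; rewrite leqn0 => /eqP -> _.
  by rewrite /pm00 /= hornerC mul1r ltr01.
have [size00 lead00 _ _ _] := size_pmono m.+1.
have cm0 : c m.+1 != 0 by rewrite gt_eqF.
have sign00 i : (i < m)%N -> 0 < (-1) ^+ (m - i) * (pm00 c m.+1).[s i].
  move=> im; rewrite pm00S hornerZ hornerD hornerN hornerMX (rootP (sroot i im)).
  rewrite mul0r sub0r (signr_subS im) mulrN mulrNN mulrCA.
  by rewrite mulr_gt0 ?invr_gt0 ?s10.
have [y [yinc ysign ys]] := extend_alternating lead00 size00 sinc sign00.
have [s' chart' s'y] := alternating_roots (eq_leq size00) (conj yinc ysign).
exists s'; split => // j jm; rewrite subSS pm10S hornerZ mulrCA mulr_gt0 //.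
apply: ssign => //; have /andP[ys' s'y'] := s'y j jm.
apply/andP; split; apply/implyP => j0.
  by rewrite -ys ?prednK ?(leq_ltn_trans (leq_pred j)).
by rewrite -ys.
Qed.

Lemma size_ptraceS k : size (ptrace c k.+1) = k.+2 /\ 0 < lead_coef (ptrace c k.+1).
Proof.
have [s00 l00 _ _ _] := size_pmono k.+1; have [_ _ s01 _ _] := size_pmono k.
have s11 : (size (pm11 c k.+1) < size (pm00 c k.+1))%N.
  by rewrite pm11S s00 ltnS (leq_trans (size_scale_leq _ _)) // (leq_trans s01).
by rewrite /ptrace size_polyDl // lead_coefDl.
Qed.

End PositiveCoefficients.

Lemma ptrace_alternating c k : (forall i, 0 < c i) -> (0 < k)%N ->
  exists bad : seq R, forall t, 0 < t -> t \notin bad ->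
  exists y, alternating (fun E => (ptrace [eta c with k |-> t] k).[E] ^+ 2 - 4) y k.*2.
Proof.
case: k => // n c_gt0 _; have [s [[sinc sroot _] s10]] := sign_chart_pm00 c_gt0 n.
exists [seq `|(pm10 c n).[s i]| | i <- iota 0 n] => t t0 tgood.
set c' := [eta c with n.+1 |-> t].
have c'_gt0 i : 0 < c' i by rewrite /c' /=; case: eqP.
have c'c : pmono c' n = pmono c n.
  by apply: eq_pmono => i /andP[_ ilen]; rewrite /c' /= ltn_eqF.
have traceE : ptrace c' n.+1 = t^-1 *: (pm00 c n * 'X - pm10 c n) + t *: pm01 c n.
  by rewrite /ptrace pm00S pm11S /pm00 /pm10 /pm01 c'c /c' /= eqxx.
have [sizeD leadD] := size_ptraceS c'_gt0 n.
have Dsign i : (i < n)%N -> 2 < (-1) ^+ (n - i) * (ptrace c' n.+1).[s i].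
  move=> ilt; have := s10 i ilt; set e := (-1) ^+ _; set x := (pm10 c n).[_] => ex.
  have x0 : x != 0 by apply: contraTneq ex => ->; rewrite mulr0 ltxx.
  have e2 : e * e = 1 by rewrite -expr2 sqrr_sign.
  have := det_pmono c_gt0 n (s i); rewrite (rootP (sroot i ilt)) mul0r sub0r -/x => det.
  have -> : (-1) ^+ (n - i) * (ptrace c' n.+1).[s i] = (e * x) / t + t / (e * x).
    rewrite traceE !(hornerD, hornerZ, hornerN, hornerMX) (rootP (sroot i ilt)).
    rewrite (signr_subS ilt) -/e -/x.
    have -> : (pm01 c n).[s i] = - x^-1 by apply: (mulIf x0); rewrite mulNr mulVf // -det opprK.
    by rewrite /e invr_signM; ring.
  apply: two_lt_add_div => //; apply: contraNneq tgood => <-.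
  apply/mapP; exists i; first by rewrite mem_iota.
  by rewrite -(gtr0_norm ex) normrM normr_sign mul1r.
have [z [zinc zsign zs]] := extend_alternating leadD sizeD sinc Dsign.
have zalt : alternating (horner (ptrace c' n.+1)) z n.+1.
  by split => // k kn; apply: lt_trans (zsign k kn).
have [x [_ xroot _] zxz] := alternating_roots (eq_leq sizeD) zalt.
exists (interleave z x); apply: (alternating_interleave (f := horner _)) => // k kn.
  apply: lt_le_trans (zsign k kn) (le_trans (ler_norm _) _).
  by rewrite normrM normr_sign mul1r.
by rewrite (rootP (xroot k kn)) normr0 ltr0n.
Qed.

End MonodromyPolynomials.

(** * Open and dense parameters *)

Lemma exists_notin (T : eqType) (s : seq T) (f : nat -> T) : injective f ->
  exists k, f k \notin s.
Proof.
move=> finj.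
have /allPn[_ /mapP[k _ ->] fks] : ~~ all (mem s) [seq f k | k <- iota 0 (size s).+1].
  apply/negP => /allP fs; have fu : uniq [seq f k | k <- iota 0 (size s).+1].
    by rewrite map_inj_uniq ?iota_uniq.
  by have := uniq_leq_size fu fs; rewrite size_map size_iota ltnn.
by exists k.
Qed.

Section Periodic.
Variables (R : realType) (p : nat).
Hypothesis p_gt0 : (0 < p)%N.
Implicit Types a b : 'rV[R]_p.

Lemma perseqE a n : perseq a n = a 0 (Ordinal (ltn_pmod n p_gt0)).
Proof. by rewrite /perseq insubT ?ltn_pmod // => ?; congr (a _ _); apply: val_inj. Qed.

Lemma perseq_gt0 a n : pos_orthant a -> 0 < perseq a n.
Proof. by rewrite perseqE; apply. Qed.

Lemma perseq_zero n : perseq (zero_b R p) n = 0.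
Proof. by rewrite perseqE mxE. Qed.

Definition pmono_mx c k : 'M[{poly R}]_2 := \matrix_(i, j)
  if i == 0 :> nat then (if j == 0 :> nat then pm00 c k else pm01 c k)
  else (if j == 0 :> nat then pm10 c k else pm11 c k).

Lemma monodromy_uptoE a z k : pos_orthant a ->
  monodromy_upto a (zero_b R p) z k = map_mx (horner^~ z) (pmono_mx (perseq a) k).
Proof.
move=> a_gt0; elim: k => [|k IH].
  apply/matrixP => i j; rewrite !mxE /pm00 /pm01 /pm10 /pm11 /=.
  by case: i j => [[|[|i]] ?] [[|[|j]] ?]; rewrite //= hornerE.
have a0 : perseq a k.+1 != 0 by rewrite gt_eqF ?perseq_gt0.
rewrite /= IH; apply/matrixP => i j; rewrite !mxE !big_ord_recl big_ord0 addr0 !mxE /=.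
rewrite perseq_zero subr0 pm00S pm01S pm10S pm11S.
by case: i j => [[|[|i]] ?] [[|[|j]] ?]; rewrite //= !(hornerZ, hornerD, hornerN, hornerMX); field.
Qed.

Lemma discriminantE a z : pos_orthant a ->
  discriminant a (zero_b R p) z = (ptrace (perseq a) p).[z].
Proof.
move=> a_gt0; rewrite /discriminant /monodromy monodromy_uptoE // /mxtrace.
by rewrite !big_ord_recl big_ord0 addr0 !mxE /= hornerD.
Qed.

Lemma monodromy_uptoS_entry z n (i j : 'I_2) b :
  monodromy_upto b (zero_b R p) z n.+1 i j = (perseq b n.+1)^-1 *
    (if i == 0 :> nat
     then z * monodromy_upto b (zero_b R p) z n ord0 j
          - monodromy_upto b (zero_b R p) z n ord_max j
     else perseq b n.+1 ^+ 2 * monodromy_upto b (zero_b R p) z n ord0 j).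
Proof.
rewrite /= !mxE !big_ord_recl big_ord0 addr0 !mxE /= perseq_zero subr0.
have -> : lift ord0 ord0 = ord_max :> 'I_2 by apply: val_inj.
by case: i => [[|[|i]] ?] //=; ring.
Qed.

Lemma cvg_perseq a n : perseq b n @[b --> a] --> perseq a n.
Proof. by rewrite (funext (perseqE^~ n)) perseqE; apply: coord_continuous. Qed.

Lemma cvg_monodromy_entry a z n i j : pos_orthant a ->
  monodromy_upto b (zero_b R p) z n i j @[b --> a] --> monodromy_upto a (zero_b R p) z n i j.
Proof.
move=> a_gt0; elim: n i j => [|n IH] i j; first by apply: cvg_cst; exact: nbhs_filter.
rewrite (funext (monodromy_uptoS_entry z n i j)) monodromy_uptoS_entry.
have a_n0 : perseq a n.+1 != 0 by rewrite gt_eqF ?perseq_gt0.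
apply: (cvgM (cvgV a_n0 (@cvg_perseq a n.+1))).
case: (i == 0 :> nat); last by apply: cvgM; [apply: cvgM|]; apply: cvg_perseq || apply: IH.
by apply: cvgB; [apply: cvgM; [apply: cvg_cst; exact: nbhs_filter|]|]; apply: IH.
Qed.

Lemma cvg_discriminant a E : pos_orthant a ->
  discriminant b (zero_b R p) E @[b --> a] --> discriminant a (zero_b R p) E.
Proof.
move=> a_gt0; have trE b : discriminant b (zero_b R p) E =
    monodromy_upto b (zero_b R p) E p ord0 ord0
    + monodromy_upto b (zero_b R p) E p ord_max ord_max.
  rewrite /discriminant /monodromy /mxtrace !big_ord_recl big_ord0 addr0.
  by congr (_ + monodromy_upto _ _ _ _ _ _); apply: val_inj.
rewrite (funext trE) trE.
exact: cvgD (@cvg_monodromy_entry a E p _ _ a_gt0) (@cvg_monodromy_entry a E p _ _ a_gt0).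
Qed.

Definition witnessed_gaps : set 'rV[R]_p := [set a | pos_orthant a /\
  exists y, alternating (fun E => discriminant a (zero_b R p) E ^+ 2 - 4) y p.*2].

Lemma open_witnessed_gaps : open witnessed_gaps.
Proof.
rewrite openE => a [a_gt0 [y [yinc ysign]]].
have pos_near : nbhs a (fun b : 'rV[R]_p => forall i, 0 < b 0 i).
  apply: (@filter_forall _ _ (fun i (b : 'rV[R]_p) => 0 < b 0 i) (nbhs a)) => i.
  exact: cvgr_gt _ (@coord_continuous R 1 p 0 i a) 0 (a_gt0 i).
have sign_near : nbhs a (fun b : 'rV[R]_p => forall k : 'I_(p.*2.+1),
    0 < (-1) ^+ (p.*2 - k) * (discriminant b (zero_b R p) (y k) ^+ 2 - 4)).
  apply: (@filter_forall _ _ (fun (k : 'I_(p.*2.+1)) (b : 'rV[R]_p) =>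
    0 < (-1) ^+ (p.*2 - k) * (discriminant b (zero_b R p) (y k) ^+ 2 - 4)) (nbhs a)) => k.
  apply: cvgr_gt (ysign k (ltn_ord k)).
  have dE := @cvg_discriminant a (y k) a_gt0.
  exact: cvgM (cvg_cst _) (cvgB (cvgM dE dE) (cvg_cst _)).
apply: filterS2 pos_near sign_near => b b_gt0 bsign; split => //.
by exists y; split => // k kp; apply: (bsign (Ordinal (kp : (k < p.*2.+1)%N))).
Qed.

Lemma dense_witnessed_gaps : @pos_orthant R p `<=` closure witnessed_gaps.
Proof.
move=> a a_gt0 B /nbhs_ballP[e e_gt0 aeB].
have c_gt0 i : 0 < perseq a i by apply: perseq_gt0.
have [bad good] := ptrace_alternating c_gt0 p_gt0.
(* the coordinate a 0 0 of a is its p-th coefficient, since p %% p = 0 *)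
pose i0 : 'I_p := Ordinal p_gt0.
have shift_inj : injective (fun k : nat => a 0 i0 + e / k.+2%:R).
  move=> k1 k2 /addrI /(mulfI (lt0r_neq0 e_gt0)) /invr_inj /eqP.
  by rewrite eqr_nat => /eqP [].
have [k tgood] := exists_notin bad shift_inj.
set t := a 0 i0 + e / k.+2%:R in tgood.
have ek_gt0 : 0 < e / k.+2%:R by rewrite divr_gt0 // ltr0n.
have t_gt0 : 0 < t by rewrite addr_gt0 // a_gt0.
pose b : 'rV[R]_p := \row_j (if j == i0 then t else a 0 j).
have b_gt0 : pos_orthant b by move=> j; rewrite mxE; case: ifP.
exists b; split; last first.
  apply: aeB; split => // i j; rewrite (ord1 i) mxE.
  case: eqP => [->|_]; last exact: ballxx.
  rewrite -ball_normE /ball_ /= /t opprD addrA subrr add0r normrN gtr0_norm //.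
  by rewrite ltr_pdivrMr ?ltr0n // ltr_pMr // ltr1n.
have perseq_b i : (0 < i <= p)%N -> perseq b i = [eta perseq a with p |-> t] i.
  case/andP=> i_gt0 ilep; rewrite /= !perseqE mxE -val_eqE /=.
  case: ltngtP ilep => //= [ilt _|-> _].
    by rewrite (_ : (i %% p == 0)%N = false) // modn_small // eqn0Ngt i_gt0.
  by rewrite (_ : (p %% p == 0)%N = true) // modnn.
have traceE : ptrace (perseq b) p = ptrace [eta perseq a with p |-> t] p.
  by rewrite /ptrace /pm00 /pm11 (eq_pmono perseq_b).
have [y [yinc ysign]] := good t t_gt0 tgood.
split => //; exists y; split => // j jp.
by rewrite discriminantE // traceE; apply: ysign.
Qed.

Lemma witnessed_all_gaps_open a : witnessed_gaps a -> all_gaps_open a (zero_b R p).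
Proof.
case=> a_gt0 [y [yinc ysign]].
have c_gt0 i : 0 < perseq a i by apply: perseq_gt0.
have [sizeD _] := size_ptraceS c_gt0 p.-1; rewrite prednK // in sizeD.
have Dalt : alternating (fun E => (ptrace (perseq a) p).[E] ^+ 2 - 4) y p.*2.
  by split => // k kp; rewrite -discriminantE // ysign.
have [l [r [lr rl bandsE]]] := bands_of_alternating (eq_leq sizeD) Dalt.
by exists l, r; split => // E; rewrite /interior_spec /= discriminantE.
Qed.

End Periodic.

Theorem lemma2p1 (R : realType) (p : nat) (hp : (0 < p)%N) :
  exists U : set 'rV[R]_p,
    [/\ open U,
        U `<=` @pos_orthant R p,
        @pos_orthant R p `<=` closure U
      & forall a, U a -> all_gaps_open a (@zero_b R p)].
Proof.
exists (@witnessed_gaps R p); split.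
- exact: open_witnessed_gaps hp.
- by move=> a [].
- exact: dense_witnessed_gaps hp.
- exact: witnessed_all_gaps_open hp.
Qed.
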